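(* Let $R$ be an arbitrary associative ring with $1$, let $A,B\unlhd R$ be two-sided ideals, and let $n\ge 3$. Let $H\le \operatorname{GL}(n,R)$ be any subgroup such that $E(n,A)\le H\le \operatorname{GL}(n,R,A)$. Then $$ C_{\operatorname{GL}(n,R)}\big(H,\operatorname{GL}(n,R,B)\big)=C_{\Omega(A,B)}\big(n,R,(B:A)\big). $$
   Context: Commutators are left-normed: $[x,y]=xyx^{-1}y^{-1}$. For subgroups $F,H$ of a group $G$, the centraliser of $F$ modulo $H$ is $C_G(F,H)=\{g\in G\mid [f,g]\in H \text{ for all } f\in F\}$. For $\xi\in R$ and $1\le i\ne j\le n$, $t_{ij}(\xi)=e+\xi e_{ij}$ is the elementary transvection ($e$ the identity matrix, $e_{ij}$ the standard matrix unit). For an ideal $I\unlhd R$, $E(n,I)$ is the subgroup of $\operatorname{GL}(n,R)$ generated by all $t_{ij}(\xi)$ with $\xi\in I$, $1\le i\neq j\le n$, and $\operatorname{GL}(n,R,I)=\{g\in\operatorname{GL}(n,R)\mid g_{ij}\equiv\delta_{ij}\pmod I\}$ is the principal congruence subgroup (kernel of reduction modulo $I$). For two-sided ideals $A,B$, the ideal quotient is $(B:A)=\{x\in R\mid xA\subseteq B \text{ and } Ax\subseteq B\}$, a two-sided ideal. The relative centraliser of $A$ modulo $B$ is $\operatorname{Cent}_R(A,B)=\{x\in R\mid xa-ax\in B \text{ for all } a\in A\}$. Finally $$C_{\Omega(A,B)}(n,R,(B:A))=\{g\in\operatorname{GL}(n,R)\mid g_{ij}\in(B:A)\text{ and } g_{ii}-g_{jj}\in(B:A)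 \text{ for all } i\ne j,\ \text{and } g_{ii}\in\operatorname{Cent}_R(A,B)\text{ for all } i\}.$$ *)

From HB Require Import structures.
From mathcomp Require Import all_boot all_order all_algebra.
Set Implicit Arguments. Unset Strict Implicit. Unset Printing Implicit Defensive.
Import GRing.Theory.
Local Open Scope ring_scope.

Section Defs.
Variable R : pzRingType.

Definition is_ideal (I : R -> Prop) : Prop :=
  [/\ I 0,
      (forall x y, I x -> I y -> I (x + y)),
      (forall x, I x -> I (- x)),
      (forall r x, I x -> I (r * x))
    & (forall r x, I x -> I (x * r))].

Definition ideal_quot (B A : R -> Prop) : R -> Prop :=
  fun x => forall a, A a -> B (x * a) /\ B (a * x).

Definition cent_rel (A B : R -> Prop) : R -> Prop :=
  fun x => forall a, A a -> B (x * a - a * x).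

Variable n : nat.

Definition is_inv (g h : 'M[R]_n) : Prop := g *m h = 1%:M /\ h *m g = 1%:M.

Definition GL (g : 'M[R]_n) : Prop := exists h, is_inv g h.

Definition GLcong (I : (R -> Prop)) (g : 'M[R]_n) : Prop :=
  GL g /\ forall i j, I (g i j - (i == j)%:R).

Definition transv (i j : 'I_n) (xi : R) : 'M[R]_n := 1%:M + xi *: delta_mx i j.

Inductive Egrp (I : (R -> Prop)) : 'M[R]_n -> Prop :=
| E_one : Egrp I 1%:M
| E_gen : forall i j xi, i != j -> I xi -> Egrp I (transv i j xi)
| E_mul : forall g h, Egrp I g -> Egrp I h -> Egrp I (g *m h)
| E_inv : forall g h, Egrp I g -> is_inv g h -> Egrp I h.

Definition is_subgroup (H : 'M[R]_n -> Prop) : Prop :=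
  [/\ H 1%:M,
      (forall g h, H g -> H h -> H (g *m h))
    & (forall g, H g -> exists h, is_inv g h /\ H h)].

(* commutator [x,y] = x y x^-1 y^-1 lies in K (inverses are unique) *)
Definition comm_in (K : 'M[R]_n -> Prop) (x y : 'M[R]_n) : Prop :=
  forall xi yi, is_inv x xi -> is_inv y yi -> K (x *m y *m xi *m yi).

Definition centr_mod (F K : 'M[R]_n -> Prop) (g : 'M[R]_n) : Prop :=
  GL g /\ forall f, F f -> comm_in K f g.

Definition C_Omega (A B : (R -> Prop)) (g : 'M[R]_n) : Prop :=
  [/\ GL g,
      (forall i j, i != j -> ideal_quot B A (g i j) /\ ideal_quot B A (g i i - g j j))
    & (forall i, cent_rel A B (g i i))].

End Defs.

From HB Require Import structures.
From mathcomp Require Import all_boot all_order all_algebra.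
Set Implicit Arguments. Unset Strict Implicit. Unset Printing Implicit Defensive.
Import GRing.Theory.
Local Open Scope ring_scope.

(* The whole argument is about the ADDITIVE commutator f g - g f.  For invertible
   f, g the multiplicative commutator satisfies
       [f,g] - e = (f g - g f) f^-1 g^-1   and   f g - g f = ([f,g] - e) g f,
   so [f,g] is congruent to e modulo B iff all entries of f g - g f lie in B
   (lemma [commutator_cong_iff]).
   - Inclusion "C_Omega <= centraliser": for f in H the matrix a = f - e has
     entries in A and f g - g f = a g - g a; the (i,j) entry of a g - g a splits
     into a diagonal part, controlled by Cent_R(A,B) and (B:A) applied to
     g_ii - g_jj, and off-diagonal parts, controlled by g_kl in (B:A).
   - Inclusion "centraliser <= C_Omega": test g against the transvections
     t_ij(x), x in A, which lie in E(n,A) <= H.  The (k,l) entry of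
     t g - g t is d_ki x g_jl - g_ki x d_lj; choosing k, l (and, since n >= 3,
     a third index) extracts every defining condition of C_Omega. *)

Section IdealFacts.
Variable R : pzRingType.
Variable I : R -> Prop.
Hypothesis hI : is_ideal I.

Lemma ideal_add x y : I x -> I y -> I (x + y).
Proof. by case: hI => _ hD _ _ _; apply: hD. Qed.

Lemma ideal_opp x : I x -> I (- x).
Proof. by case: hI => _ _ hN _ _; apply: hN. Qed.

Lemma ideal_sub x y : I x -> I y -> I (x - y).
Proof. by move=> hx hy; apply: ideal_add hx (ideal_opp hy). Qed.

Lemma ideal_oppE x : I (- x) -> I x.
Proof. by move=> hx; rewrite -(opprK x); apply: ideal_opp. Qed.

Lemma ideal_mulr r x : I x -> I (x * r).
Proof. by case: hI => _ _ _ _ hr; apply: hr. Qed.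

Lemma ideal_sum (T : finType) (P : pred T) (F : T -> R) :
  (forall k, P k -> I (F k)) -> I (\sum_(k | P k) F k).
Proof. by case: hI => h0 hD _ _ _; apply: big_ind. Qed.

End IdealFacts.

Section MatrixFacts.
Variable R : pzRingType.
Variable n : nat.
Implicit Types (I : R -> Prop) (f g a : 'M[R]_n) (i j k l : 'I_n).

Definition entries_in I (M : 'M[R]_n) : Prop := forall i j, I (M i j).

Lemma entries_in_mulr I (hI : is_ideal I) (M N : 'M[R]_n) :
  entries_in I M -> entries_in I (M *m N).
Proof.
move=> hM i j; rewrite mxE; apply: ideal_sum => // k _.
exact: ideal_mulr.
Qed.

Lemma GLcongE I g : GLcong I g <-> GL g /\ entries_in I (g - 1%:M).
Proof. by split=> -[hg he]; split=> // i j; move: (he i j); rewrite !mxE. Qed.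

Lemma is_inv_mul f fi g gi :
  is_inv f fi -> is_inv g gi -> is_inv (f *m g) (gi *m fi).
Proof.
move=> [h1 h2] [h3 h4]; split.
  by rewrite mulmxA -(mulmxA f) h3 mulmx1 h1.
by rewrite mulmxA -(mulmxA gi) h2 mulmx1 h4.
Qed.

Lemma is_inv_sym f g : is_inv f g -> is_inv g f.
Proof. by case. Qed.

(* [f,g] = e (mod I) iff f g = g f (mod I): the two differences are related by
   multiplication with invertible matrices. *)
Lemma commutator_cong_iff I (hI : is_ideal I) f fi g gi :
  is_inv f fi -> is_inv g gi ->
  GLcong I (f *m g *m fi *m gi) <-> entries_in I (f *m g - g *m f).
Proof.
move=> hf hg.
have mult_to_add : f *m g - g *m f = (f *m g *m fi *m gi - 1%:M) *m (g *m f).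
  by rewrite mulmxBl mul1mx !mulmxA -(mulmxA _ gi g) hg.2 mulmx1
             -(mulmxA _ fi f) hf.2 mulmx1.
have add_to_mult : f *m g *m fi *m gi - 1%:M = (f *m g - g *m f) *m (fi *m gi).
  by rewrite mulmxBl !mulmxA -(mulmxA g f fi) hf.1 mulmx1 hg.1.
split=> [/GLcongE[_ he] | he].
  by rewrite mult_to_add; apply: entries_in_mulr.
apply/GLcongE; split; last by rewrite add_to_mult; apply: entries_in_mulr.
exists (g *m (f *m (gi *m fi))).
apply: is_inv_mul; last exact: is_inv_sym hg.
by apply: is_inv_mul; [apply: is_inv_mul | apply: is_inv_sym hf].
Qed.

Lemma additive_commutator_entry a g i j : (a *m g - g *m a) i j =
  (a i j * g j j - g i i * a i j) +
  (\sum_(k | k != j) a i k * g k j - \sum_(k | k != i) g i k * a k j).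
Proof.
rewrite !mxE (bigD1 j) //= [X in _ - X](bigD1 i) //=.
by rewrite opprD addrACA.
Qed.

Lemma delta_mulmxE i j (x : R) g k l :
  ((x *: delta_mx i j) *m g) k l = (k == i)%:R * (x * g j l).
Proof.
rewrite mxE (bigD1 j) //= big1 ?addr0 => [|m /negbTE hm];
  rewrite !mxE ?hm ?eqxx ?andbT ?andbF ?mulr0 ?mul0r //.
by case: (k == i); rewrite ?mulr1 ?mul1r ?mulr0 ?mul0r.
Qed.

Lemma mulmx_deltaE i j (x : R) g k l :
  (g *m (x *: delta_mx i j)) k l = g k i * x * (l == j)%:R.
Proof.
rewrite mxE (bigD1 i) //= big1 ?addr0 => [|m /negbTE hm];
  rewrite !mxE ?hm ?eqxx ?andbF ?mulr0 ?mul0r //=.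
by case: (l == j); rewrite ?mulr1 ?mul1r ?mulr0 ?mul0r.
Qed.

(* t_ij(x) t_ij(-x) = e for i != j, since e_ij e_ij = 0. *)
Lemma transv_inv i j (x : R) : i != j -> is_inv (transv i j x) (transv i j (- x)).
Proof.
move=> hij.
have sq0 y z : (y *: delta_mx i j) *m (z *: delta_mx i j) = 0 :> 'M[R]_n.
  apply/matrixP => p q; rewrite delta_mulmxE !mxE [j == i]eq_sym (negbTE hij).
  by rewrite !mulr0.
rewrite /transv; split; rewrite mulmxDr !mulmxDl !mul1mx mulmx1 sq0 addr0
  -addrA -scalerDl ?addNr ?addrN scale0r addr0 //.
Qed.

Lemma transv_commutator_entry i j (x : R) g k l :
  (transv i j x *m g - g *m transv i j x) k l =
  (k == i)%:R * (x * g j l) - g k i * x * (l == j)%:R.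
Proof.
rewrite /transv mulmxDl mulmxDr mul1mx mulmx1 opprD addrACA subrr add0r.
by rewrite !mxE -delta_mulmxE -mulmx_deltaE !mxE.
Qed.

Lemma third_index (p q : 'I_n) : (3 <= n)%N -> exists r : 'I_n, r != p /\ r != q.
Proof.
move=> hn.
have /subsetPn [r _] : ~~ ([set: 'I_n] \subset [set p; q]).
  apply/negP => /subset_leq_card; rewrite cardsT card_ord cards2.
  by case: (p != q) => /= hle; move: (leq_trans hn hle).
by rewrite !inE negb_or => /andP[hp hq]; exists r.
Qed.

End MatrixFacts.

Section Levels.
Variable R : pzRingType.
Variables (A B : R -> Prop).
Hypothesis hB : is_ideal B.
Variable n : nat.
Implicit Types (g a : 'M[R]_n) (i j k l : 'I_n).

(* The conditions of C_Omega force f g = g f (mod B) for every f = e + a with a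
   in M_n(A): each term of (a g - g a)_ij is killed by (B:A) or Cent_R(A,B). *)
Lemma omega_commutes_mod a g :
  (forall i j, i != j -> ideal_quot B A (g i j) /\ ideal_quot B A (g i i - g j j)) ->
  (forall i, cent_rel A B (g i i)) ->
  entries_in A a -> entries_in B (a *m g - g *m a).
Proof.
move=> hoff hcent ha i j; rewrite additive_commutator_entry.
apply: ideal_add => //; last first.
  apply: ideal_sub => //; apply: ideal_sum => // k hk.
    exact: ((hoff k j hk).1 _ (ha i k)).2.
  by rewrite eq_sym in hk; exact: ((hoff i k hk).1 _ (ha k j)).1.
have [<-|hij] := eqVneq i j.
  by apply: ideal_oppE => //; rewrite opprB; apply: hcent.
have -> : a i j * g j j - g i i * a i j =
    - (g j j * a i j - a i j * g j j) + (g j j - g i i) * a i j.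
  by rewrite mulrBl opprB addrA subrK.
apply: ideal_add => //; first by apply: ideal_opp => //; apply: hcent.
by rewrite eq_sym in hij; exact: ((hoff j i hij).2 _ (ha i j)).1.
Qed.

Section TransvectionTest.
Hypothesis hn : (3 <= n)%N.
Variable g : 'M[R]_n.
Hypothesis hcomm : forall i j x, i != j -> A x ->
  entries_in B (transv i j x *m g - g *m transv i j x).

Lemma transv_test i j x k l : i != j -> A x ->
  B ((k == i)%:R * (x * g j l) - g k i * x * (l == j)%:R).
Proof. by move=> hij hx; rewrite -transv_commutator_entry; apply: hcomm. Qed.

(* x g_jl in B for j != l: entry (i,l) of [t_ij(x), g] with i != j. *)
Lemma offdiag_quot_left j l x : j != l -> A x -> B (x * g j l).
Proof.
move=> hjl hx; have [i [hij _]] := third_index j j hn.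
by have := transv_test i l hij hx; rewrite eqxx eq_sym (negbTE hjl) mul1r mulr0 subr0.
Qed.

(* g_ki x in B for k != i: entry (k,j) of [t_ij(x), g] with j != i. *)
Lemma offdiag_quot_right k i x : k != i -> A x -> B (g k i * x).
Proof.
move=> hki hx; have [j [hji _]] := third_index i i hn.
rewrite eq_sym in hji.
have := transv_test k j hji hx; rewrite eqxx (negbTE hki) mul0r mulr1 sub0r.
exact: ideal_oppE.
Qed.

(* x g_jj - g_ii x in B for i != j: entry (i,j) of [t_ij(x), g]. *)
Lemma twisted_diag_diff i j x : i != j -> A x -> B (x * g j j - g i i * x).
Proof. by move=> hij hx; have := transv_test i j hij hx; rewrite !eqxx mul1r mulr1. Qed.

(* g_ii - g_jj lies in (B:A), using a third index r and two twisted differences. *)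
Lemma diag_diff_quot i j : i != j -> ideal_quot B A (g i i - g j j).
Proof.
move=> hij x hx; have [r [hri hrj]] := third_index i j hn; split.
  have -> : (g i i - g j j) * x =
      (x * g r r - g j j * x) - (x * g r r - g i i * x).
    by rewrite mulrBl [in RHS]opprB [in RHS]addrC [in RHS]addrA subrK.
  by apply: ideal_sub => //; apply: twisted_diag_diff; rewrite // eq_sym.
have -> : x * (g i i - g j j) =
    (x * g i i - g r r * x) - (x * g j j - g r r * x).
  by rewrite mulrBr opprB addrA subrK.
by apply: ideal_sub => //; apply: twisted_diag_diff.
Qed.

(* g_ii lies in Cent_R(A,B): x g_ii - g_ii x = x (g_ii - g_jj) + (x g_jj - g_ii x). *)
Lemma diag_cent i : cent_rel A B (g i i).
Proof.
move=> x hx; have [j [hji _]] := third_index i i hn.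
have -> : g i i * x - x * g i i =
    - (x * (g i i - g j j) + (x * g j j - g i i * x)).
  by rewrite mulrBr addrA subrK opprB.
apply: ideal_opp => //; apply: ideal_add => //.
  by apply: (diag_diff_quot _ hx).2; rewrite eq_sym.
by apply: twisted_diag_diff; rewrite // eq_sym.
Qed.

End TransvectionTest.
End Levels.

Theorem theorem1 (R : pzRingType) (A B : R -> Prop) (n : nat)
  (hA : is_ideal A) (hB : is_ideal B) (hn : (3 <= n)%N)
  (H : 'M[R]_n -> Prop) (hH : is_subgroup H)
  (hEH : forall g, Egrp A g -> H g) (hHA : forall g, H g -> GLcong A g) :
  forall g : 'M[R]_n, centr_mod H (GLcong B) g <-> C_Omega A B g.
Proof.
move=> g; split=> [[hGL hc] | [hGL hoff hcent]].
- have [gi hg] := hGL.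
  have hcomm i j x : i != j -> A x ->
      entries_in B (transv i j x *m g - g *m transv i j x).
    move=> hij hx; have ht := transv_inv x hij.
    apply/(commutator_cong_iff hB ht hg); apply: hc ht hg.
    by apply: hEH; apply: E_gen.
  split=> // [i j hij | i]; last exact: diag_cent hcomm i.
  split; last exact: diag_diff_quot hcomm _ _ hij.
  by move=> x hx; split; [apply: offdiag_quot_right hcomm _ _ _ hij hx
                         | apply: offdiag_quot_left hcomm _ _ _ hij hx].
- split=> // f Hf fi gi hf hg; apply/(commutator_cong_iff hB hf hg).
  have /GLcongE[_ hfA] := hHA f Hf.
  have -> : f *m g - g *m f = (f - 1%:M) *m g - g *m (f - 1%:M).
    by rewrite mulmxBl mulmxBr mul1mx mulmx1 opprB addrA subrK.
  exact: omega_commutes_mod hoff hcent hfA.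
Qed.
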